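(* Let $A=(a_{ij})\in\mathbb{R}^{n\times n}$ be symmetric positive definite, $b\in\mathbb{R}^n$, and let $x\in\mathbb{R}^n$ be a current approximation with residual $r=b-Ax=(r_1,\dots,r_n)^T$, assumed nonzero. Let $1\le m\le n$ and let $\mathcal{J}=\{i_1,\dots,i_m\}\subseteq\{1,\dots,n\}$ be a set of $m$ distinct indices consisting of the indices of $m$ components of $r$ with largest absolute value. Let $E=[e_{i_1},\dots,e_{i_m}]\in\mathbb{R}^{n\times m}$, where $e_j$ denotes the $j$-th column of the $n\times n$ identity matrix, set $y=(E^TAE)^{-1}E^Tr$ and $x_{new}=x+Ey$. Let $d=A^{-1}b-x$ and $d_{new}=A^{-1}b-x_{new}$. Then $$\|d\|_A^2-\|d_{new}\|_A^2\ \ge\ \frac{\sum_{k\in\mathcal{J}} r_k^2}{\sum_{k\in\mathcal{J}} a_{kk}},$$ and $$\|d_{new}\|_A\ \le\ \left(1-\frac{\lambda_{min}(A)}{\sum_{k\in\mathcal{J}} a_{kk}}\cdot\frac{\sum_{k\in\mathcal{J}} r_k^2}{\sum_{k=1}^{n} r_k^2}\right)^{1/2}\|d\|_A .$$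
   Context: For a vector $z$, $\|z\|_A=(Az,z)^{1/2}$ denotes the $A$-norm. $\lambda_{min}(A)$ denotes the smallest eigenvalue of $A$. The update $x_{new}=x+Ey$ is one step of the projection method with search and constraint space $\mathrm{span}\{e_{i_1},\dots,e_{i_m}\}$ (Petrov–Galerkin condition $r-AEy\perp \mathrm{span}\{e_{i_1},\dots,e_{i_m}\}$). *)

From mathcomp Require Import all_boot all_order all_algebra.
From mathcomp Require Import reals.
Set Implicit Arguments. Unset Strict Implicit. Unset Printing Implicit Defensive.
Import Order.TTheory GRing.Theory Num.Theory.
Local Open Scope ring_scope.

Definition spd (R : realType) (n : nat) (A : 'M[R]_n) : Prop :=
  A^T = A /\ forall z : 'cV[R]_n, z != 0 -> 0 < (z^T *m A *m z) ord0 ord0.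

Definition anorm2 (R : realType) (n : nat) (A : 'M[R]_n) (z : 'cV[R]_n) : R :=
  (z^T *m A *m z) ord0 ord0.

Definition anorm (R : realType) (n : nat) (A : 'M[R]_n) (z : 'cV[R]_n) : R :=
  Num.sqrt (anorm2 A z).

Definition is_lambda_min (R : realType) (n : nat) (A : 'M[R]_n) (l : R) : Prop :=
  eigenvalue A l /\ forall mu : R, eigenvalue A mu -> l <= mu.

Definition selmx (R : realType) (n m : nat) (f : 'I_m -> 'I_n) : 'M[R]_(n, m) :=
  \matrix_(i < n, k < m) (i == f k)%:R.

From mathcomp Require Import all_boot all_order all_algebra reals.
From mathcomp Require Import ring lra.
Import Order.TTheory GRing.Theory Num.Theory.
Local Open Scope ring_scope.

Set Implicit Arguments.
Unset Strict Implicit.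
Unset Printing Implicit Defensive.

(** With [B = E^T A E] and [g = E^T r], the projection step decreases the
    squared A-norm of the error by exactly [y^T B y = g^T B^-1 g].  Since
    [B <= tr(B) I] for a positive semidefinite [B], this is at least
    [|g|^2 / tr B], which is the first claim.  For the second, the Rayleigh
    bound [lambda_min |z|^2 <= z^T A z] yields [lambda_min |d|_A^2 <= |A d|^2
    = |r|^2], so the decrease is also at least
    [(lambda_min / tr B) (|g|^2 / |r|^2) |d|_A^2]. *)

Lemma quadratic_ge0_discr (R : realFieldType) (a b c : R) :
  0 <= c -> (forall t, 0 <= a + 2 * t * b + t ^+ 2 * c) -> b ^+ 2 <= a * c.
Proof.
move=> c_ge0 quad_ge0; have [c0|c_neq0] := eqVneq c 0.
  have [b0|b_neq0] := eqVneq b 0; first by rewrite b0 c0 expr0n mulr0.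
  have := quad_ge0 (- (a + 1) / (2 * b)).
  have -> : 2 * (- (a + 1) / (2 * b)) * b = - (a + 1) by field.
  by rewrite c0 mulr0; lra.
have c_gt0 : 0 < c by rewrite lt_neqAle eq_sym c_neq0.
have := quad_ge0 (- b / c).
have -> : a + 2 * (- b / c) * b + (- b / c) ^+ 2 * c = (a * c - b ^+ 2) / c by field.
by rewrite pmulr_lge0 ?invr_gt0 // subr_ge0.
Qed.

Lemma sqrt_le_sqrtM (R : rcfType) (a k D : R) :
  0 <= a -> 0 <= D -> a <= k * D -> Num.sqrt a <= Num.sqrt k * Num.sqrt D.
Proof.
move=> a_ge0 D_ge0 a_le; have [k_ge0|k_lt0] := leP 0 k.
  by rewrite -sqrtrM // ler_sqrt // mulr_ge0.
have -> : a = 0 by apply/eqP; rewrite eq_le a_ge0 (le_trans a_le) // nmulr_rle0.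
by rewrite sqrtr0 mulr_ge0 ?sqrtr_ge0.
Qed.

Lemma sqrt_contraction (R : rcfType) (D Dnew s a l q : R) :
  0 <= Dnew -> 0 <= s -> 0 <= a -> 0 < q -> l * D <= q -> s / a <= D - Dnew ->
  Num.sqrt Dnew <= Num.sqrt (1 - l / a * (s / q)) * Num.sqrt D.
Proof.
move=> Dnew_ge0 s_ge0 a_ge0 q_gt0 lD_le decrease.
have c_ge0 := divr_ge0 s_ge0 a_ge0.
have ratio_le1 : l * D / q <= 1 by rewrite ler_pdivrMr // mul1r.
have shrink := ler_piMr c_ge0 ratio_le1.
apply: sqrt_le_sqrtM => //; first lra.
have -> : (1 - l / a * (s / q)) * D = D - s / a * (l * D / q) by ring.
lra.
Qed.

Section DotProduct.
Variable R : realFieldType.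

Definition dot n (u v : 'cV[R]_n) : R := \sum_i u i ord0 * v i ord0.

Lemma dotE n (u v : 'cV[R]_n) : dot u v = (u^T *m v) ord0 ord0.
Proof. by rewrite mxE; apply: eq_bigr => i _; rewrite mxE. Qed.

Lemma dotC n (u v : 'cV[R]_n) : dot u v = dot v u.
Proof. by apply: eq_bigr => i _; rewrite mulrC. Qed.

Lemma dotDl n (u w v : 'cV[R]_n) : dot (u + w) v = dot u v + dot w v.
Proof. by rewrite /dot -big_split; apply: eq_bigr => i _; rewrite mxE mulrDl. Qed.

Lemma dotZl n a (u v : 'cV[R]_n) : dot (a *: u) v = a * dot u v.
Proof. by rewrite /dot mulr_sumr; apply: eq_bigr => i _; rewrite mxE mulrA. Qed.

Lemma dotNl n (u v : 'cV[R]_n) : dot (- u) v = - dot u v.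
Proof. by rewrite -scaleN1r dotZl mulN1r. Qed.

Lemma dotBl n (u w v : 'cV[R]_n) : dot (u - w) v = dot u v - dot w v.
Proof. by rewrite dotDl dotNl. Qed.

Lemma dotDr n (u v w : 'cV[R]_n) : dot u (v + w) = dot u v + dot u w.
Proof. by rewrite ![dot u _]dotC dotDl. Qed.

Lemma dotZr n a (u v : 'cV[R]_n) : dot u (a *: v) = a * dot u v.
Proof. by rewrite ![dot u _]dotC dotZl. Qed.

Lemma dotNr n (u v : 'cV[R]_n) : dot u (- v) = - dot u v.
Proof. by rewrite ![dot u _]dotC dotNl. Qed.

Lemma dotBr n (u v w : 'cV[R]_n) : dot u (v - w) = dot u v - dot u w.
Proof. by rewrite dotDr dotNr. Qed.

Lemma dot0l n (v : 'cV[R]_n) : dot 0 v = 0.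
Proof. by rewrite -(scale0r 0) dotZl mul0r. Qed.

Lemma dot_mulmx k n (M : 'M[R]_(k, n)) u v : dot u (M *m v) = dot (M^T *m u) v.
Proof. by rewrite !dotE trmx_mul trmxK mulmxA. Qed.

Lemma dot_deltal n (i : 'I_n) v : dot (delta_mx i ord0) v = v i ord0.
Proof. by rewrite dotE trmx_delta -rowE mxE. Qed.

Lemma dot_ge0 n (u : 'cV[R]_n) : 0 <= dot u u.
Proof. by apply: sumr_ge0 => i _; rewrite -expr2 sqr_ge0. Qed.

Lemma sqr_le_dot n (u : 'cV[R]_n) i : u i ord0 ^+ 2 <= dot u u.
Proof.
rewrite /dot (bigD1 i) //= -expr2 lerDl.
by apply: sumr_ge0 => k _; rewrite -expr2 sqr_ge0.
Qed.

Lemma dot_gt0 n (u : 'cV[R]_n) : u != 0 -> 0 < dot u u.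
Proof.
apply: contraNT; rewrite -leNgt => u_le0; apply/eqP/matrixP => i j.
rewrite (ord1 j) mxE; apply/eqP; rewrite -sqrf_eq0 eq_le sqr_ge0 andbT.
exact: le_trans (sqr_le_dot u i) u_le0.
Qed.

Lemma form_sum n (M : 'M[R]_n) g :
  dot g (M *m g) = \sum_i \sum_j g i ord0 * g j ord0 * M i j.
Proof.
apply: eq_bigr => i _; rewrite mxE mulr_sumr; apply: eq_bigr => j _.
by rewrite mulrA mulrAC.
Qed.

Lemma form_le_sum_norm n (M : 'M[R]_n) z :
  dot z (M *m z) <= (\sum_i \sum_j `|M i j|) * dot z z.
Proof.
rewrite form_sum mulr_suml; apply: ler_sum => i _; rewrite mulr_suml.
apply: ler_sum => j _; apply: (le_trans (ler_norm _)).
rewrite !normrM mulrC ler_wpM2l //.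
have hi := sqr_le_dot z i; have hj := sqr_le_dot z j.
rewrite -real_normK ?num_real // in hi; rewrite -real_normK ?num_real // in hj.
have a0 := normr_ge0 (z i ord0); have b0 := normr_ge0 (z j ord0).
nra.
Qed.

Lemma pd_form_ge0 n (M : 'M[R]_n) :
  (forall z, z != 0 -> 0 < dot z (M *m z)) -> forall z, 0 <= dot z (M *m z).
Proof. by move=> pdM z; have [->|/pdM/ltW //] := eqVneq z 0; rewrite dot0l. Qed.

Lemma pd_unitmx n (M : 'M[R]_n) :
  (forall z, z != 0 -> 0 < dot z (M *m z)) -> M \in unitmx.
Proof.
move=> pdM; rewrite unitmxE unitfE; apply/det0P => -[v v_neq0 vM0].
have := pdM v^T; rewrite trmx_eq0 v_neq0 dotE trmxK mulmxA vM0 mul0mx mxE.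
by rewrite ltxx => /(_ isT).
Qed.
End DotProduct.

Section SymmetricForm.
Variables (R : realFieldType) (n : nat) (M : 'M[R]_n).
Hypothesis symM : M^T = M.

Lemma dot_mulmxC u v : dot u (M *m v) = dot v (M *m u).
Proof. by rewrite dot_mulmx symM dotC. Qed.

Lemma formD u v : dot (u + v) (M *m (u + v)) =
  dot u (M *m u) + 2 * dot u (M *m v) + dot v (M *m v).
Proof.
rewrite mulmxDr !dotDl !dotDr [dot v (M *m u)]dot_mulmxC.
by rewrite mulr2n mulrDl mul1r !addrA.
Qed.

Lemma formB u v : dot (u - v) (M *m (u - v)) =
  dot u (M *m u) - 2 * dot u (M *m v) + dot v (M *m v).
Proof. by rewrite formD mulmxN dotNr dotNl dotNr opprK mulrN. Qed.

Hypothesis psdM : forall z, 0 <= dot z (M *m z).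

Lemma form_cauchy_schwarz u v :
  dot u (M *m v) ^+ 2 <= dot u (M *m u) * dot v (M *m v).
Proof.
apply: quadratic_ge0_discr => // t.
have := psdM (u + t *: v); rewrite formD -!scalemxAr !dotZr !dotZl.
by rewrite !mulrA expr2 -!mulrA.
Qed.

Lemma psd_diag_ge0 i : 0 <= M i i.
Proof. by have := psdM (delta_mx i ord0 : 'cV_n); rewrite -colE dot_deltal mxE. Qed.

Lemma psd_entry_pair (g : 'cV_n) i j :
  2 * (g i ord0 * g j ord0 * M i j) <= g j ord0 ^+ 2 * M i i + g i ord0 ^+ 2 * M j j.
Proof.
have := psdM (g j ord0 *: delta_mx i ord0 - g i ord0 *: (delta_mx j ord0 : 'cV_n)).
by rewrite formB -!scalemxAr !dotZl !dotZr -!colE !dot_deltal !mxE; lra.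
Qed.

Lemma form_le_trace g : dot g (M *m g) <= \tr M * dot g g.
Proof.
rewrite -(ler_pM2l (ltr0Sn _ 1)) form_sum mulr_sumr.
apply: (@le_trans _ _ (\sum_i \sum_j (g j ord0 ^+ 2 * M i i + g i ord0 ^+ 2 * M j j))).
  by apply: ler_sum => i _; rewrite mulr_sumr; apply: ler_sum => j _; apply: psd_entry_pair.
under eq_bigr do rewrite big_split /=.
rewrite big_split /= mulr2n mulrDl mul1r /dot /mxtrace; apply: lerD.
  rewrite mulr_suml; apply: ler_sum => i _; rewrite mulr_sumr; apply: ler_sum => j _.
  by rewrite mulrC expr2.
rewrite mulrC mulr_suml; apply: ler_sum => i _; rewrite mulr_sumr.
by apply: ler_sum => j _; rewrite expr2.
Qed.

Lemma sqnorm_mulmx_div_trace_le y :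
  dot (M *m y) (M *m y) / \tr M <= dot y (M *m y).
Proof.
set g := M *m y; set t := (\tr M)^-1.
have t_ge0 : 0 <= t by rewrite invr_ge0 sumr_ge0 // => i _; apply: psd_diag_ge0.
(* [t] is the optimal step [1 / tr M]; [t ^+ 2 * tr M = t] holds even when [tr M = 0]. *)
have ttr : t ^+ 2 * \tr M = t.
  rewrite /t; have [->|tr_neq0] := eqVneq (\tr M) 0; first by rewrite invr0 mulr0.
  by rewrite expr2 mulfVK.
have := psdM (y - t *: g).
rewrite formB -!scalemxAr !dotZr !dotZl [dot y (M *m g)]dot_mulmx symM -/g.
have := ler_wpM2l (exprn_ge0 2 t_ge0) (form_le_trace g).
rewrite [_ * (\tr M * _)]mulrA ttr mulrC; nra.
Qed.

Lemma psd_unitmx_coercive : M \in unitmx ->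
  exists2 K, 0 < K & forall z, dot z z <= K * dot z (M *m z).
Proof.
move=> Munit; set K := \sum_i \sum_j `|invmx M i j| + 1.
have K_gt0 : 0 < K by rewrite ltr_wpDl // !sumr_ge0 // => i _; rewrite sumr_ge0.
exists K => // z.
have [->|z_neq0] := eqVneq z 0; first by rewrite !dot0l mulr0.
have zz_gt0 := dot_gt0 z_neq0.
(* [(z, z)^2 = (z, M (M^-1 z))^2 <= (z, M z) (z, M^-1 z)] by Cauchy-Schwarz. *)
have := form_cauchy_schwarz z (invmx M *m z).
rewrite !mulmxA mulmxV // !mul1mx [dot (invmx M *m z) z]dotC => cs.
have inv_bound : dot z (invmx M *m z) <= K * dot z z.
  apply: le_trans (form_le_sum_norm _ z) _.
  by rewrite ler_wpM2r ?dot_ge0 // lerDl.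
have : dot z z ^+ 2 <= (K * dot z (M *m z)) * dot z z.
  apply: le_trans cs _.
  by rewrite [K * _]mulrC -mulrA ler_wpM2l.
by rewrite expr2 ler_pM2r.
Qed.

End SymmetricForm.

Lemma rayleigh_lb_le_sqnorm (R : realFieldType) n (A : 'M[R]_n) mu :
  0 <= mu -> (forall z, mu * dot z z <= dot z (A *m z)) ->
  forall d, mu * dot d (A *m d) <= dot (A *m d) (A *m d).
Proof.
move=> mu_ge0 rayleigh_lb d.
have := ler_wpM2l mu_ge0 (rayleigh_lb d).
have := dot_ge0 (A *m d - mu *: d).
by rewrite dotBl !dotBr !dotZl !dotZr [dot (A *m d) d]dotC; lra.
Qed.

Lemma form_projection_step (R : realFieldType) n m (A : 'M[R]_n) (E : 'M[R]_(n, m)) d y :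
  A^T = A -> (E^T *m A *m E) *m y = E^T *m (A *m d) ->
  dot d (A *m d) - dot (d - E *m y) (A *m (d - E *m y)) =
    dot y ((E^T *m A *m E) *m y).
Proof.
move=> symA By; rewrite formB //.
have -> : dot (E *m y) (A *m (E *m y)) = dot y ((E^T *m A *m E) *m y).
  by rewrite -!mulmxA [RHS]dot_mulmx trmxK.
have -> : dot d (A *m (E *m y)) = dot y ((E^T *m A *m E) *m y).
  by rewrite By [RHS]dot_mulmx trmxK dot_mulmxC.
ring.
Qed.

Section RayleighQuotient.
Variables (R : realType) (n : nat) (A : 'M[R]_n).
Hypotheses (symA : A^T = A) (pdA : forall z, z != 0 -> 0 < dot z (A *m z)).

Let psdA := pd_form_ge0 pdA.

(* The infimum [mu] of the Rayleigh quotient is an eigenvalue: otherwise the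
   positive semidefinite [A - mu I] would be invertible, hence coercive, and
   [mu + 1 / K] would be a larger lower bound. *)
Lemma rayleigh_inf_eigenvalue : (0 < n)%N ->
  exists mu, [/\ eigenvalue A mu, 0 <= mu & forall z, mu * dot z z <= dot z (A *m z)].
Proof.
move=> n_gt0.
pose S : classical_sets.set R :=
  fun q => exists2 z : 'cV[R]_n, z != 0 & q = dot z (A *m z) / dot z z.
have S_lb0 : classical_sets.lbound S 0.
  by move=> _ [z z_neq0 ->]; rewrite divr_ge0 ?psdA ?dot_ge0.
have S_neq0 : classical_sets.nonempty S.
  have e_neq0 : delta_mx (Ordinal n_gt0) ord0 != 0 :> 'cV[R]_n.
    by apply/negP => /eqP/matrixP/(_ (Ordinal n_gt0) ord0)/eqP; rewrite !mxE !eqxx oner_eq0.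
  by eexists; exists (delta_mx (Ordinal n_gt0) ord0).
set mu := inf S.
have mu_lb z : mu * dot z z <= dot z (A *m z).
  have [->|z_neq0] := eqVneq z 0; first by rewrite !dot0l mulr0.
  rewrite -ler_pdivlMr ?dot_gt0 //; apply: ge_inf; first by exists 0.
  by exists z.
exists mu; split=> //; last by apply: lb_le_inf.
rewrite /eigenvalue /eigenspace kermx_eq0 row_free_unit; apply/negP => Cunit.
have symC : (A - mu%:M)^T = A - mu%:M by rewrite linearB /= tr_scalar_mx symA.
have formC z : dot z ((A - mu%:M) *m z) = dot z (A *m z) - mu * dot z z.
  by rewrite mulmxBl mul_scalar_mx dotBr dotZr.
have psdC z : 0 <= dot z ((A - mu%:M) *m z) by rewrite formC subr_ge0.
have [K K_gt0 coercive] := psd_unitmx_coercive symC psdC Cunit.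
have : mu + K^-1 <= mu.
  apply: lb_le_inf => // _ [z z_neq0 ->].
  rewrite ler_pdivlMr ?dot_gt0 // mulrDl.
  have := coercive z; rewrite formC -ler_pdivrMl // => h.
  by rewrite [K^-1 * _]mulrC; lra.
by rewrite gerDl leNgt invr_gt0 K_gt0.
Qed.

Lemma lambda_min_form_le_sqnorm l d : (0 < n)%N -> is_lambda_min A l ->
  l * dot d (A *m d) <= dot (A *m d) (A *m d).
Proof.
move=> n_gt0 [_ l_min]; have [mu [mu_eig mu_ge0 mu_lb]] := rayleigh_inf_eigenvalue n_gt0.
apply: le_trans (rayleigh_lb_le_sqnorm mu_ge0 mu_lb d).
by rewrite ler_wpM2r ?l_min ?psdA.
Qed.

End RayleighQuotient.

Section SelectionMatrix.
Variables (R : realType) (n m : nat) (f : 'I_m -> 'I_n).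
Local Notation E := (selmx R f).

Lemma selmxE : E = colsub f 1%:M.
Proof. by apply/matrixP => i k; rewrite !mxE. Qed.

Lemma tr_selmx_mul p (B : 'M[R]_(n, p)) : E^T *m B = rowsub f B.
Proof. by rewrite selmxE trmx_mxsub trmx1 -rowsubE. Qed.

Lemma mxtrace_selmx_form (A : 'M[R]_n) : \tr (E^T *m A *m E) = \sum_k A (f k) (f k).
Proof.
rewrite -mulmxA tr_selmx_mul selmxE mulmx_colsub mulmx1.
by apply: eq_bigr => k _; rewrite !mxE.
Qed.

Hypothesis f_inj : injective f.

Lemma selmx_mul_eq0 (z : 'cV[R]_m) : (E *m z == 0) = (z == 0).
Proof.
apply/eqP/eqP => [Ez0|->]; last by rewrite mulmx0.
have sub_id : rowsub f E = 1%:M.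
  by apply/matrixP => k l; rewrite !mxE (inj_eq f_inj).
by rewrite -[z]mul1mx -sub_id mul_rowsub_mx Ez0; apply/matrixP => k j; rewrite !mxE.
Qed.

End SelectionMatrix.

Section ProjectionStep.
Variables (R : realType) (n m : nat) (A : 'M[R]_n) (f : 'I_m -> 'I_n) (d : 'cV[R]_n).
Hypotheses (symA : A^T = A) (pdA : forall z, z != 0 -> 0 < dot z (A *m z)).
Hypothesis f_inj : injective f.
Local Notation E := (selmx R f).
Local Notation B := (E^T *m A *m E).
Local Notation y := (invmx B *m (E^T *m (A *m d))).

Let symB : B^T = B.
Proof. by rewrite !trmx_mul trmxK symA mulmxA. Qed.

Let pdB z : z != 0 -> 0 < dot z (B *m z).
Proof. by rewrite -!mulmxA dot_mulmx trmxK -(selmx_mul_eq0 f_inj); apply: pdA. Qed.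

Let By : B *m y = E^T *m (A *m d).
Proof. by rewrite [LHS]mulmxA mulmxV ?pd_unitmx // mul1mx. Qed.

Lemma projection_step_decrease :
  dot d (A *m d) - dot (d - E *m y) (A *m (d - E *m y)) = dot y (B *m y).
Proof. exact: form_projection_step. Qed.

Lemma projection_step_decrease_ge :
  (\sum_k (A *m d) (f k) ord0 ^+ 2) / \sum_k A (f k) (f k) <= dot y (B *m y).
Proof.
have sqnorm_sub : dot (rowsub f (A *m d)) (rowsub f (A *m d)) =
    \sum_k (A *m d) (f k) ord0 ^+ 2.
  by apply: eq_bigr => k _; rewrite mxE expr2.
have := sqnorm_mulmx_div_trace_le symB (pd_form_ge0 pdB) y.
by rewrite [in X in X <= _]By tr_selmx_mul mxtrace_selmx_form sqnorm_sub.
Qed.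

End ProjectionStep.

Lemma anorm2E (R : realType) n (A : 'M[R]_n) z : anorm2 A z = dot z (A *m z).
Proof. by rewrite /anorm2 dotE mulmxA. Qed.

Theorem theorem1 (R : realType) (n m : nat) (A : 'M[R]_n) (b x : 'cV[R]_n)
  (f : 'I_m -> 'I_n) (lmin : R) :
  spd A ->
  b - A *m x != 0 ->
  (1 <= m)%N -> (m <= n)%N ->
  injective f ->
  (forall (k : 'I_m) (j : 'I_n), j \notin [set f l | l in 'I_m] ->
      `|(b - A *m x) j ord0| <= `|(b - A *m x) (f k) ord0|) ->
  is_lambda_min A lmin ->
  let r := b - A *m x in
  let E := selmx R f in
  let y := invmx (E^T *m A *m E) *m (E^T *m r) in
  let xnew := x + E *m y in
  let d := invmx A *m b - x in
  let dnew := invmx A *m b - xnew in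
  let sJr := \sum_(k < m) (r (f k) ord0) ^+ 2 in
  let sJa := \sum_(k < m) A (f k) (f k) in
  let sr := \sum_(k < n) (r k ord0) ^+ 2 in
  anorm2 A d - anorm2 A dnew >= sJr / sJa /\
  anorm A dnew <= Num.sqrt (1 - lmin / sJa * (sJr / sr)) * anorm A d.
Proof.
move=> [symA spdA] r_neq0 m_gt0 _ f_inj _ lminA r E y xnew d dnew sJr sJa sr.
have pdA z : z != 0 -> 0 < dot z (A *m z) by rewrite -anorm2E; apply: spdA.
have Ad : A *m d = r by rewrite /d mulmxBr mulmxA mulmxV ?pd_unitmx // mul1mx.
have decrease : anorm2 A d - anorm2 A dnew = dot y ((E^T *m A *m E) *m y).
  have -> : dnew = d - E *m y by rewrite /dnew /xnew /d opprD addrA.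
  by rewrite !anorm2E /y -Ad projection_step_decrease.
have progress : sJr / sJa <= anorm2 A d - anorm2 A dnew.
  by rewrite decrease /y /sJr /sJa -Ad; apply: projection_step_decrease_ge.
have srE : sr = dot r r by apply: eq_bigr => k _; rewrite expr2.
have n_gt0 : (0 < n)%N := leq_ltn_trans (leq0n _) (ltn_ord (f (Ordinal m_gt0))).
split=> //; rewrite /anorm; apply: sqrt_contraction progress.
- by rewrite anorm2E pd_form_ge0.
- by apply: sumr_ge0 => k _; apply: sqr_ge0.
- by apply: sumr_ge0 => k _; apply: psd_diag_ge0 (pd_form_ge0 pdA) (f k).
- by rewrite srE dot_gt0.
- by rewrite srE -Ad anorm2E lambda_min_form_le_sqnorm.
Qed.
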